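(* For every response $y$, $$\bar\pi_n(y|x)=\frac{n\,\pi_{\mathrm{gen}}(y|x)\,\phi_\beta(y|x)}{1-e^{-n}}\int_0^\infty e^{n(\Phi_\beta(s)-1)}\,e^{-s\phi_\beta(y|x)}\,ds.$$
   Context: Fix a prompt $x$, a countable response space $\mathcal{Y}$, conditional distributions $\pi_{\mathrm{target}}$ and $\pi_{\mathrm{gen}}$ (full support), a reward $r$, and $\beta>0$. Let $\phi_\beta(y|x)=\frac{\pi_{\mathrm{target}}(y|x)}{\pi_{\mathrm{gen}}(y|x)}e^{\beta r(y|x)}$ and $\Phi_\beta(s)=\mathbb{E}_{Y\sim\pi_{\mathrm{gen}}(\cdot|x)}[e^{-s\phi_\beta(Y|x)}]$ for $s\ge0$. Let $N\sim\mathrm{Poi}(n)|_{>0}$ (Poisson with mean $n$ conditioned to be positive) and, given $N$, let $Y_1,\dots,Y_N$ be i.i.d. from $\pi_{\mathrm{gen}}(\cdot|x)$; $N_y$ is the number of $j$ with $Y_j=y$ and $Z=\sum_{j=1}^N\phi_\beta(Y_j|x)$. Define $\hat\pi_N(y|x)=\mathbb{E}[N_y\phi_\beta(y|x)/Z\mid N]$ (the output distribution of sequential Monte Carlo with $N$ particles) and $\bar\pi_n(y|x)=\mathbb{E}_{N}[\hat\pi_N(y|x)]$. *)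

From HB Require Import structures.
From mathcomp Require Import all_boot all_order all_algebra.
From mathcomp Require Import all_classical all_reals all_analysis.
Set Implicit Arguments. Unset Strict Implicit. Unset Printing Implicit Defensive.
Import Order.TTheory GRing.Theory Num.Theory.
Local Open Scope classical_set_scope.
Local Open Scope ring_scope.

(* The prompt x is fixed and suppressed: pi_gen, pi_target, r are functions of y
   only.  Y is a countable response space (countType). *)

Definition phi_beta {R : realType} {Y : countType}
  (pi_target pi_gen r : Y -> R) (beta : R) (y : Y) : R :=
  pi_target y / pi_gen y * expR (beta * r y).

(* Phi_beta(s) = E_{Y ~ pi_gen}[exp(-s phi_beta(Y))]; the sum is in [0,1] when
   pi_gen is a distribution, so taking its real part (fine) loses nothing. *)
Definition Phi_beta {R : realType} {Y : countType}
  (pi_target pi_gen r : Y -> R) (beta : R) (s : R) : R :=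
  fine (\esum_(y in [set: Y]) (pi_gen y * expR (- (s * phi_beta pi_target pi_gen r beta y)))%:E).

(* pihat_k(y) = E[N_y phi(y) / Z | N = k], with Y_1..Y_k iid pi_gen, written
   out as the sum over all k-tuples of responses weighted by their probability. *)
Definition smc_output {R : realType} {Y : countType}
  (pi_target pi_gen r : Y -> R) (beta : R) (k : nat) (y : Y) : \bar R :=
  \esum_(ys in [set: k.-tuple Y])
    ((\prod_(j < k) pi_gen (tnth ys j)) *
     ((count_mem y ys)%:R * phi_beta pi_target pi_gen r beta y /
      (\sum_(j < k) phi_beta pi_target pi_gen r beta (tnth ys j))))%:E.

Definition poisson_pos_pmf {R : realType} (n : R) (k : nat) : R :=
  expR (- n) * n ^+ k / (k`!)%:R / (1 - expR (- n)).

Definition smc_avg_output {R : realType} {Y : countType}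
  (pi_target pi_gen r : Y -> R) (beta : R) (n : R) (y : Y) : \bar R :=
  \esum_(k in [set k : nat | (0 < k)%N])
    ((poisson_pos_pmf n k)%:E * smc_output pi_target pi_gen r beta k y)%E.

From HB Require Import structures.
From mathcomp Require Import all_boot all_order all_algebra.
From mathcomp Require Import all_classical all_reals all_analysis.
From mathcomp Require Import measurable_realfun ring lra.
Import Order.TTheory GRing.Theory Num.Theory.
Local Open Scope classical_set_scope.
Local Open Scope ring_scope.

(* Writing [1 / Z = \int_0^oo exp (- s Z) ds] turns the self-normalised weight
   [N_y phi(y) / Z] into an integral whose integrand is a product over the
   particles.  For fixed [s] the expectation over [k] i.i.d. particles then
   factorises into [k pi_gen(y) phi(y) exp (- s phi(y)) Phi(s)^(k-1)], and
   averaging over the positive Poisson [N] sums the exponential series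
   [sum_k k Phi^(k-1) n^k / k! = n exp (n Phi)].  Tonelli's theorem justifies
   every exchange of sums and integrals. *)

Section esum_scale.
Local Open Scope ereal_scope.

Lemma ge0_esumZl {R : realType} {T : choiceType} (S : set T) (a : T -> \bar R)
    (c : R) :
  (forall i, 0 <= a i) -> (0 <= c)%R ->
  \esum_(i in S) (c%:E * a i) = c%:E * \esum_(i in S) a i.
Proof.
move=> a0 c0; rewrite /esum -ereal_supZl //; last first.
  by apply/set0P; exists 0; exists set0; [exact: fsets_set0 | rewrite fsbig_set0].
rewrite image_comp; congr ereal_sup; apply: eq_imagel => A _ /=.
by rewrite ge0_mule_fsumr.
Qed.

End esum_scale.

Section countable_esum.
Local Open Scope ereal_scope.
Context {R : realType} {I : countType}.

Let pickle_seq (a : I -> \bar R) (n : nat) : \bar R :=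
  if pickle_inv n is Some i then a i else 0.

Let ge0_esum_pickle a : (forall i, 0 <= a i) ->
  \esum_(i in [set: I]) a i = \sum_(n <oo) pickle_seq a n.
Proof.
move=> a0; rewrite nneseries_esumT => [|n]; last by rewrite /pickle_seq; case: pickle_inv.
rewrite [RHS](_ : _ = \esum_(n in [set: nat])
    if n \in range (@pickle I) then pickle_seq a n else 0); last first.
  apply: eq_esum => n _; case: ifPn => // /negP npick.
  rewrite /pickle_seq; case E: pickle_inv => [i|] //; exfalso; apply: npick.
  by rewrite inE; exists i => //; rewrite -[RHS](@pickle_invK I n) E.
rewrite -esum_mkcondr setTI esum_image; last first.
  by move=> i j _ _; exact: (pcan_inj (@pickleK I)).
by apply: eq_esum => i _; rewrite /pickle_seq pickleK_inv.
Qed.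

Context d (T : measurableType d) (mu : {measure set T -> \bar R}).
Variables (D : set T) (mD : measurable D) (S : set I) (f : I -> T -> \bar R).
Hypothesis mf : forall i, S i -> measurable_fun D (f i).
Hypothesis f0 : forall i x, S i -> D x -> 0 <= f i x.

Let fS n x := pickle_seq (fun i => if i \in S then f i x else 0) n.

Let mfS n : measurable_fun D (fS n).
Proof.
rewrite /fS /pickle_seq; case: pickle_inv => [i|]; last exact: measurable_cst.
by case: (boolP (i \in S)) => [/set_mem Si|_]; [exact: mf | exact: measurable_cst].
Qed.

Let fS_ge0 n x : D x -> 0 <= fS n x.
Proof.
rewrite /fS /pickle_seq => Dx; case: pickle_inv => // i.
by case: ifPn => // /set_mem Si; exact: f0.
Qed.

Let esum_fS x : D x -> \esum_(i in S) f i x = \sum_(n <oo) fS n x.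
Proof.
move=> Dx; rewrite esum_mkcond ge0_esum_pickle // => i.
by case: ifPn => // /set_mem Si; exact: f0.
Qed.

Lemma measurable_fun_esum : measurable_fun D (fun x => \esum_(i in S) f i x).
Proof.
apply: (eq_measurable_fun (fun x => \sum_(n <oo | n \in xpredT) fS n x)).
  by move=> x /set_mem Dx; rewrite esum_fS.
by apply: ge0_emeasurable_sum => // n x Dx _; exact: fS_ge0.
Qed.

Lemma ge0_integral_esum :
  \int[mu]_(x in D) (\esum_(i in S) f i x) = \esum_(i in S) \int[mu]_(x in D) f i x.
Proof.
rewrite (eq_integral (fun x => \sum_(n <oo) fS n x)); last first.
  by move=> x /set_mem Dx; rewrite esum_fS.
rewrite integral_nneseries // esum_mkcond ge0_esum_pickle; last first.
  by move=> i; case: ifPn => // /set_mem Si; apply: integral_ge0 => x Dx; exact: f0.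
apply: congr_lim; apply/funext => N; apply: eq_bigr => n _.
rewrite /fS /pickle_seq; case: pickle_inv => [i|]; last exact: integral0.
by case: ifPn => // _; exact: integral0.
Qed.

End countable_esum.

Section tuple_esum.
Local Open Scope ereal_scope.
Context {R : realType} {T : countType}.

Lemma esum_tuple_prod k (f : 'I_k -> T -> R) (c : 'I_k -> R) :
  (forall i x, (0 <= f i x)%R) ->
  (forall i, \esum_(x in [set: T]) (f i x)%:E = (c i)%:E) ->
  \esum_(ys in [set: k.-tuple T]) (\prod_(i < k) f i (tnth ys i))%:E =
  (\prod_(i < k) c i)%:E.
Proof.
elim: k f c => [|k IH] f c f0 fc.
  rewrite big_ord0 (_ : [set: 0.-tuple T] = [set [tuple]]); last first.
    by apply/seteqP; split => t //= _; rewrite (tuple0 t).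
  by rewrite esum_set1 ?big_ord0 // lee_fin.
have c0 i : (0 <= c i)%R.
  by rewrite -lee_fin -fc esum_ge0 // => x _; rewrite lee_fin.
rewrite (reindex_esum [set: T * k.-tuple T] _ (fun p => [tuple of p.1 :: p.2])); last first.
  rewrite setTT_bijective; apply: (@Bijective _ _ _ (fun t => (thead t, behead_tuple t))).
    by move=> [x t]; congr pair => //; apply: val_inj.
  by move=> t /=; rewrite -tuple_eta.
rewrite (_ : [set: T * k.-tuple T] = [set: T] `*`` (fun _ => [set: k.-tuple T])); last first.
  by apply/seteqP; split.
rewrite -(@esum_esum _ _ _ _ _ (fun (x : T) (t : k.-tuple T) =>
    (\prod_(i < k.+1) f i (tnth [tuple of x :: t] i))%:E)); last first.
  by move=> x t _ _; rewrite lee_fin prodr_ge0.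
under eq_esum => x _.
  under eq_esum => t _ do rewrite big_ord_recl tnth0 EFinM.
  under eq_esum => t _ do (under eq_bigr => i _ do rewrite tnthS).
  rewrite ge0_esumZl // => [|t]; last by rewrite lee_fin prodr_ge0.
  rewrite (IH (fun i => f (lift ord0 i)) (fun i => c (lift ord0 i))) // muleC.
  over.
rewrite /= ge0_esumZl ?prodr_ge0 // => [|x]; last by rewrite lee_fin.
by rewrite fc -EFinM big_ord_recl mulrC.
Qed.

Lemma esum_tuple_count k (w : T -> R) (W : R) (y : T) :
  (forall x, (0 <= w x)%R) -> \esum_(x in [set: T]) (w x)%:E = W%:E ->
  \esum_(ys in [set: k.-tuple T])
    ((count_mem y ys)%:R * \prod_(j < k) w (tnth ys j))%:E =
  (k%:R * w y * W ^+ k.-1)%:E.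
Proof.
move=> w0 wW.
(* [count_mem y ys = sum_j [tnth ys j == y]], and each summand factorises. *)
pose g (j i : 'I_k) x := (w x * (if i == j then (x == y)%:R else 1))%R.
have g0 j i x : (0 <= g j i x)%R by rewrite mulr_ge0 //; case: (i == j); case: (x == y).
have count_split (ys : k.-tuple T) : ((count_mem y ys)%:R * \prod_(j < k) w (tnth ys j))%:E =
    \sum_(j < k) (\prod_(i < k) g j i (tnth ys i))%:E.
  rewrite sumEFin -sum1_count big_mkcond /= big_tuple natr_sum mulr_suml.
  congr EFin; apply: eq_bigr => j _; rewrite big_split /= -big_mkcond /= big_pred1_eq.
  by rewrite mulrC; case: eqP.
have esum_g j i : \esum_(x in [set: T]) (g j i x)%:E = (if i == j then w y else W)%:E.
  rewrite /g; case: (i == j) => /=; last by under eq_esum do rewrite mulr1.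
  rewrite (esumID [set y]) => [|x _]; last by rewrite lee_fin mulr_ge0 ?ler0n.
  rewrite setTI esum_set1 ?lee_fin ?mulr_ge0 ?ler0n // eqxx mulr1.
  by rewrite esum1 ?adde0 // => x /= [_ xy]; rewrite (introF eqP xy) mulr0.
under eq_esum do rewrite count_split.
rewrite esum_sum => [|ys j _ _]; last by rewrite lee_fin prodr_ge0.
under eq_bigr => j _ do rewrite (esum_tuple_prod _ _ _ (g0 j) (esum_g j)).
rewrite sumEFin; congr EFin.
under eq_bigr => j _ do rewrite (bigD1 j) //= eqxx (eq_bigr (fun=> W)) => [|i /negPf -> //].
under eq_bigr => j _ do rewrite prodr_const cardC1 card_ord.
by rewrite sumr_const card_ord -mulrA mulr_natl.
Qed.

End tuple_esum.

Section exponential_integrals.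
Local Open Scope ereal_scope.
Context {R : realType}.

Lemma measurable_expRNM (D : set R) (Z : R) :
  measurable_fun D (fun s : R => expR (- (s * Z))).
Proof.
by apply: measurableT_comp => //; apply: measurable_funN; exact: measurable_funM.
Qed.

Lemma integral_expRNM (Z : R) : (0 < Z)%R ->
  \int[lebesgue_measure]_(s in `[0%R, +oo[%classic) (expR (- (s * Z)))%:E = (Z^-1)%:E.
Proof.
move=> Z0; transitivity ((Z^-1)%:E * (Z%:E *
    \int[lebesgue_measure]_(s in `[0%R, +oo[%classic) (expR (- (s * Z)))%:E)).
  by rewrite muleA -EFinM mulVf ?mul1e ?lt0r_neq0.
rewrite -[RHS]mule1; congr (_ * _).
rewrite -[RHS](integral_exponential_pdf Z0) -ge0_integralZl_EFin ?ltW //; last first.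
  by apply/measurable_EFinP; exact: measurable_expRNM.
rewrite integral_mkcond; apply: eq_integral => s _.
rewrite /restrict /exponential_pdf /patch; case: ifPn => // _.
by rewrite -EFinM mulNr (mulrC Z s).
Qed.

Lemma integral_cexpRNM (c Z : R) : (0 <= c)%R -> (c != 0 -> 0 < Z)%R ->
  \int[lebesgue_measure]_(s in `[0%R, +oo[%classic) (c * expR (- (s * Z)))%:E =
  (c / Z)%:E.
Proof.
move=> c0 cZ; have [->|cn0] := eqVneq c 0%R.
  by under eq_integral do rewrite mul0r; rewrite integral0 mul0r.
under eq_integral do rewrite EFinM.
rewrite ge0_integralZl_EFin // ?integral_expRNM ?cZ //.
by apply/measurable_EFinP; exact: measurable_expRNM.
Qed.

End exponential_integrals.

Section poisson_series.
Local Open Scope ereal_scope.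
Context {R : realType}.

Lemma esum_expR_series (x : R) : (0 <= x)%R ->
  \esum_(m in [set: nat]) (x ^+ m / m`!%:R)%:E = (expR x)%:E.
Proof.
move=> x0; rewrite -nneseries_esumT => [|m]; last by rewrite lee_fin divr_ge0 ?exprn_ge0.
rewrite expRE -EFin_lim; last first.
  by rewrite /pseries /=; under eq_fun do rewrite mulrC; exact: is_cvg_series_exp_coeff.
apply/congr_lim/funext => N /=; rewrite /pseries /series /= -sumEFin.
by apply: eq_bigr => m _; rewrite /exp_coeff mulrC.
Qed.

Lemma poisson_pos_pmf_ge0 (n : R) k : (0 < n)%R -> (0 <= poisson_pos_pmf n k)%R.
Proof.
move=> n0; rewrite /poisson_pos_pmf divr_ge0 ?divr_ge0 ?mulr_ge0 ?exprn_ge0 ?expR_ge0 ?ltW //.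
by rewrite subr_gt0 expR_lt1 oppr_lt0.
Qed.

Lemma esum_poisson_pos_pgf_deriv (n t : R) : (0 < n)%R -> (0 <= t)%R ->
  \esum_(k in [set k : nat | (0 < k)%N]) (poisson_pos_pmf n k * (k%:R * t ^+ k.-1))%:E =
  (n / (1 - expR (- n)) * expR (n * (t - 1)))%:E.
Proof.
move=> n0 t0; have en1 : (0 < 1 - expR (- n))%R by rewrite subr_gt0 expR_lt1 oppr_lt0.
rewrite (reindex_esum [set: nat] _ succn); last first.
  split=> // [a b _ _ []//|k /= k0]; by exists k.-1; rewrite ?prednK.
have pmf_succ m : (poisson_pos_pmf n m.+1 * (m.+1%:R * t ^+ m) =
    expR (- n) * n / (1 - expR (- n)) * ((n * t) ^+ m / m`!%:R))%R.
  rewrite /poisson_pos_pmf factS natrM exprS exprMn; field.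
  have m0 : (0 <= m%:R :> R)%R := ler0n R m.
  rewrite pnatr_eq0 -lt0n fact_gt0 /= !gt_eqF //; lra.
under eq_esum => m _ do rewrite /= pmf_succ EFinM.
have nt0 : (0 <= n * t)%R := mulr_ge0 (ltW n0) t0.
rewrite ge0_esumZl ?esum_expR_series //; last 2 first.
- by move=> m; rewrite lee_fin divr_ge0 ?exprn_ge0.
- by rewrite divr_ge0 ?mulr_ge0 ?expR_ge0 // ltW.
by rewrite -EFinM mulrBr mulr1 expRD; congr EFin; ring.
Qed.

End poisson_series.

Section smc_integral_representation.
Local Open Scope ereal_scope.
Context {R : realType} {Y : countType} (pi_target pi_gen r : Y -> R) (beta : R).
Hypothesis target_ge0 : forall y, (0 <= pi_target y)%R.
Hypothesis gen_gt0 : forall y, (0 < pi_gen y)%R.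
Hypothesis gen_sum1 : \esum_(y in [set: Y]) (pi_gen y)%:E = 1.

Local Notation phi := (phi_beta pi_target pi_gen r beta).
Local Notation Phi := (Phi_beta pi_target pi_gen r beta).

Lemma phi_beta_ge0 y : (0 <= phi y)%R.
Proof. by rewrite mulr_ge0 ?expR_ge0 // divr_ge0 // ltW. Qed.

Lemma Phi_betaE s : (0 <= s)%R ->
  \esum_(x in [set: Y]) (pi_gen x * expR (- (s * phi x)))%:E = (Phi s)%:E.
Proof.
move=> s0; rewrite /Phi_beta fineK //; apply/fin_numPlt/andP; split.
  apply: (@lt_le_trans _ _ 0) => //; apply: esum_ge0 => x _.
  by rewrite lee_fin mulr_ge0 ?expR_ge0 // ltW.
rewrite (@le_lt_trans _ _ 1) ?ltry // -gen_sum1; apply: le_esum => x _.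
rewrite lee_fin ler_piMr ?(ltW (gen_gt0 x)) // expR_le1 oppr_le0 mulr_ge0 //.
exact: phi_beta_ge0.
Qed.

Lemma Phi_beta_ge0 s : (0 <= s)%R -> (0 <= Phi s)%R.
Proof.
move=> s0; rewrite -lee_fin -Phi_betaE // esum_ge0 // => x _.
by rewrite lee_fin mulr_ge0 ?expR_ge0 // ltW.
Qed.

Lemma measurable_Phi_beta : measurable_fun (`[0%R, +oo[%classic : set R) Phi.
Proof.
have mesum : measurable_fun (`[0%R, +oo[%classic : set R)
    (fun s => \esum_(x in [set: Y]) (pi_gen x * expR (- (s * phi x)))%:E).
  apply: measurable_fun_esum => [x _|x s _ _].
    by apply/measurable_EFinP; apply: measurable_funM => //; exact: measurable_expRNM.
  by rewrite lee_fin mulr_ge0 ?expR_ge0 // ltW.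
apply/measurable_EFinP; apply: (eq_measurable_fun _ _ mesum) => s.
by rewrite inE /= in_itv /= andbT => s0; rewrite Phi_betaE.
Qed.

Lemma smc_output_laplace k y :
  smc_output pi_target pi_gen r beta k y =
  \int[lebesgue_measure]_(s in `[0%R, +oo[%classic)
    \esum_(ys in [set: k.-tuple Y])
      ((count_mem y ys)%:R * phi y *
       \prod_(j < k) (pi_gen (tnth ys j) * expR (- (s * phi (tnth ys j)))))%:E.
Proof.
pose c (ys : k.-tuple Y) := ((count_mem y ys)%:R * phi y * \prod_(j < k) pi_gen (tnth ys j))%R.
pose Z (ys : k.-tuple Y) := (\sum_(j < k) phi (tnth ys j))%R.
have c0 ys : (0 <= c ys)%R.
  rewrite mulr_ge0 ?prodr_ge0 // => [|j _]; last exact: ltW.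
  by rewrite mulr_ge0 ?phi_beta_ge0.
(* [smc_output] divides by [Z ys], with the junk value [_ / 0 = 0]; this is
   harmless because [Z ys = 0] forces [c ys = 0]. *)
have Z_gt0 ys : c ys != 0%R -> (0 < Z ys)%R.
  move=> cn0; have Ny0 : (count_mem y ys)%:R != 0%R :> R.
    by apply: contraNneq cn0; rewrite /c => ->; rewrite !mul0r.
  have phiy0 : phi y != 0%R.
    by apply: contraNneq cn0; rewrite /c => ->; rewrite mulr0 mul0r.
  have /tnthP[j yj] : y \in ys by rewrite -has_pred1 has_count lt0n -(pnatr_eq0 R).
  rewrite /Z (bigD1 j) //= -yj ltr_wpDr ?sumr_ge0 // => [i _|]; first exact: phi_beta_ge0.
  by rewrite lt_def phiy0 phi_beta_ge0.
transitivity (\int[lebesgue_measure]_(s in `[0%R, +oo[%classic)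
    \esum_(ys in [set: k.-tuple Y]) (c ys * expR (- (s * Z ys)))%:E); last first.
  apply: eq_integral => s _; apply: eq_esum => ys _; congr EFin.
  by rewrite big_split /= /c /Z mulr_sumr -sumrN expR_sum !mulrA.
rewrite ge0_integral_esum //; last 2 first.
- move=> ys _; apply/measurable_EFinP; apply: measurable_funM => //.
  exact: measurable_expRNM.
- by move=> ys s _ _; rewrite lee_fin mulr_ge0 ?expR_ge0.
apply: eq_esum => ys _; rewrite integral_cexpRNM //; last exact: Z_gt0.
by congr EFin; rewrite /c /Z; ring.
Qed.

Let gen_phi_ge0 y : (0 <= pi_gen y * phi y)%R.
Proof. exact: mulr_ge0 (ltW (gen_gt0 y)) (phi_beta_ge0 y). Qed.

Definition smc_density k y s : R :=
  pi_gen y * phi y * expR (- (s * phi y)) * (k%:R * Phi s ^+ k.-1).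

Lemma smc_density_ge0 k y s : (0 <= s)%R -> (0 <= smc_density k y s)%R.
Proof.
move=> s0; apply: mulr_ge0; first by rewrite mulr_ge0 ?expR_ge0 ?gen_phi_ge0.
by rewrite mulr_ge0 ?exprn_ge0 ?Phi_beta_ge0.
Qed.

Lemma measurable_smc_density k y :
  measurable_fun (`[0%R, +oo[%classic : set R) (smc_density k y).
Proof.
apply: measurable_funM.
  by apply: measurable_funM => //; exact: measurable_expRNM.
by apply: measurable_funM => //; apply: measurable_funX; exact: measurable_Phi_beta.
Qed.

Lemma smc_output_integral k y :
  smc_output pi_target pi_gen r beta k y =
  \int[lebesgue_measure]_(s in `[0%R, +oo[%classic) (smc_density k y s)%:E.
Proof.
rewrite smc_output_laplace; apply: eq_integral => s.
rewrite inE /= in_itv /= andbT => s0.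
under eq_esum => ys _ do rewrite mulrAC mulrC EFinM.
rewrite ge0_esumZl ?phi_beta_ge0 // => [|ys]; last first.
  by rewrite lee_fin mulr_ge0 ?prodr_ge0 // => j _; rewrite mulr_ge0 ?expR_ge0 // ltW.
rewrite (esum_tuple_count _ _ _ _ _ (Phi_betaE _ s0)) => [|x]; last first.
  by rewrite mulr_ge0 ?expR_ge0 // ltW.
by rewrite -EFinM /smc_density; congr EFin; ring.
Qed.

Variable n : R.
Hypothesis n_gt0 : (0 < n)%R.

Lemma smc_avg_output_integral y :
  smc_avg_output pi_target pi_gen r beta n y =
  \int[lebesgue_measure]_(s in `[0%R, +oo[%classic)
    \esum_(k in [set k : nat | (0 < k)%N]) (poisson_pos_pmf n k * smc_density k y s)%:E.
Proof.
rewrite ge0_integral_esum // => [|k _|k s _]; last 2 first.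
- by apply/measurable_EFinP; apply: measurable_funM => //; exact: measurable_smc_density.
- rewrite /= in_itv /= andbT => s0.
  by rewrite lee_fin mulr_ge0 ?poisson_pos_pmf_ge0 ?smc_density_ge0.
apply: eq_esum => k _; rewrite smc_output_integral.
under [RHS]eq_integral do rewrite EFinM.
rewrite ge0_integralZl_EFin ?poisson_pos_pmf_ge0 //.
- by move=> s; rewrite /= in_itv /= andbT => s0; rewrite lee_fin smc_density_ge0.
- by apply/measurable_EFinP; exact: measurable_smc_density.
Qed.

Lemma esum_poisson_smc_density y s : (0 <= s)%R ->
  \esum_(k in [set k : nat | (0 < k)%N]) (poisson_pos_pmf n k * smc_density k y s)%:E =
  (n * pi_gen y * phi y / (1 - expR (- n)) *
   (expR (n * (Phi s - 1)) * expR (- (s * phi y))))%:E.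
Proof.
move=> s0; under eq_esum => k _ do rewrite /smc_density mulrCA EFinM.
rewrite ge0_esumZl.
- rewrite esum_poisson_pos_pgf_deriv ?Phi_beta_ge0 //.
  by rewrite -EFinM; congr EFin; ring.
- move=> k; rewrite lee_fin mulr_ge0 ?poisson_pos_pmf_ge0 //.
  by rewrite mulr_ge0 ?exprn_ge0 ?Phi_beta_ge0.
- by rewrite mulr_ge0 ?expR_ge0 ?gen_phi_ge0.
Qed.

End smc_integral_representation.

Theorem lemmaD1 (R : realType) (Y : countType)
  (pi_target pi_gen r : Y -> R) (beta n : R)
  (Htgt0 : forall y, 0 <= pi_target y)
  (Htgt1 : (\esum_(y in [set: Y]) (pi_target y)%:E = 1)%E)
  (Hgen0 : forall y, 0 < pi_gen y)
  (Hgen1 : (\esum_(y in [set: Y]) (pi_gen y)%:E = 1)%E)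
  (Hbeta : 0 < beta) (Hn : 0 < n) (y : Y) :
  smc_avg_output pi_target pi_gen r beta n y =
  ((n * pi_gen y * phi_beta pi_target pi_gen r beta y / (1 - expR (- n)))%:E *
   \int[lebesgue_measure]_(s in `[0%R, +oo[%classic)
      (expR (n * (Phi_beta pi_target pi_gen r beta s - 1))
       * expR (- (s * phi_beta pi_target pi_gen r beta y)))%:E)%E.
Proof.
pose phi := phi_beta pi_target pi_gen r beta.
pose Phi := Phi_beta pi_target pi_gen r beta.
have c_ge0 : 0 <= n * pi_gen y * phi y / (1 - expR (- n)).
  apply: divr_ge0; last by rewrite subr_ge0 expR_le1 oppr_le0 ltW.
  by rewrite -mulrA mulr_ge0 ?(ltW Hn) // mulr_ge0 ?(ltW (Hgen0 y)) // phi_beta_ge0.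
have mg : measurable_fun (`[0%R, +oo[%classic : set R)
    (fun s => expR (n * (Phi s - 1)) * expR (- (s * phi y))).
  apply: measurable_funM; last exact: measurable_expRNM.
  apply: measurableT_comp => //; apply: measurable_funM => //.
  by apply: measurable_funB => //; exact: measurable_Phi_beta.
rewrite smc_avg_output_integral //.
under eq_integral => s.
  rewrite inE /= in_itv /= andbT => s0.
  rewrite esum_poisson_smc_density // EFinM.
  over.
by rewrite ge0_integralZl_EFin //; exact/measurable_EFinP.
Qed.
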